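(* Let $\mathcal{C}$ be a robust graph class (not necessarily hereditary) for which $\beta_{\mathcal{C}}$ is finite. For every integer $d\ge1$, $$\beta_{\mathcal{C}}(d)\ge\begin{cases}2^{d-1}+1 & \text{if } \beta_{\mathcal{C}}=1,\\ (\beta_{\mathcal{C}}-1)\,2^{d}+1 & \text{if } \beta_{\mathcal{C}}\ge 2.\end{cases}$$
   Context: $\mathrm{OPT}(G)$ is the minimum vertex cover size. $Y\subseteq V(G)$ is a blocking set of $G$ if no vertex cover of $G$ of size $\mathrm{OPT}(G)$ contains $Y$; minimal if no proper subset is a blocking set. $\beta(G)$ is the maximum size of a minimal blocking set of $G$; $\beta_{\mathcal{C}}=\sup_{G\in\mathcal{C}}\beta(G)$. Elimination distance: $\mathrm{ed}_{\mathcal{C}}(G)=0$ if $G\in\mathcal{C}$; otherwise if $G$ is connected, $\mathrm{ed}_{\mathcal{C}}(G)=1+\min_{v}\mathrm{ed}_{\mathcal{C}}(G-v)$; otherwise the maximum over connected components. $\beta_{\mathcal{C}}(d)=\max\{\beta(G):\mathrm{ed}_{\mathcal{C}}(G)\le d\}$. A class is robust if a graph is in it iff all its connected components are. *)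

From mathcomp Require Import all_boot.
Set Implicit Arguments. Unset Strict Implicit. Unset Printing Implicit Defensive.

Record sgraph := SGraph {
  vert :> finType;
  adj : rel vert;
  adj_sym : symmetric adj;
  adj_irr : irreflexive adj }.

Section Induced.
Variables (G : sgraph) (A : {set vert G}).
Definition ind_vert : finType := {x : vert G | x \in A}.
Definition ind_adj : rel ind_vert := fun x y => adj (val x) (val y).
Lemma ind_adj_sym : symmetric ind_adj.
Proof. by move=> x y; rewrite /ind_adj adj_sym. Qed.
Lemma ind_adj_irr : irreflexive ind_adj.
Proof. by move=> x; rewrite /ind_adj adj_irr. Qed.
Definition induced : sgraph := SGraph ind_adj_sym ind_adj_irr.
End Induced.

Definition delv (G : sgraph) (v : vert G) : sgraph := induced [set~ v].

Definition component (G : sgraph) (x : vert G) : sgraph :=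
  induced [set y | connect (@adj G) x y].

Definition isomorphic (G H : sgraph) : Prop :=
  exists f : vert G -> vert H, bijective f /\
    forall x y, adj (f x) (f y) = adj x y.

Definition graph_class := sgraph -> Prop.
Definition iso_closed (C : graph_class) : Prop :=
  forall G H, isomorphic G H -> C G -> C H.

Definition robust (C : graph_class) : Prop :=
  forall G : sgraph, C G <-> (forall x : vert G, C (component x)).

Definition vertex_cover (G : sgraph) (S : {set vert G}) : Prop :=
  forall x y : vert G, adj x y -> (x \in S) || (y \in S).
Definition min_vertex_cover (G : sgraph) (S : {set vert G}) : Prop :=
  vertex_cover S /\ forall S' : {set vert G}, vertex_cover S' -> #|S| <= #|S'|.

Definition blocking (G : sgraph) (Y : {set vert G}) : Prop :=
  forall S : {set vert G}, min_vertex_cover S -> ~ (Y \subset S).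
Definition minimal_blocking (G : sgraph) (Y : {set vert G}) : Prop :=
  blocking Y /\ forall Z : {set vert G}, Z \proper Y -> ~ blocking Z.

(* beta_C = k (a finite value, attained): every minimal blocking set of a
   graph of C has size <= k, and some graph of C has one of size k. *)
Definition beta_class_eq (C : graph_class) (k : nat) : Prop :=
  (forall G, C G -> forall Y : {set vert G}, minimal_blocking Y -> #|Y| <= k)
  /\ (exists G, C G /\ exists Y : {set vert G}, minimal_blocking Y /\ #|Y| = k).

(* ed_le C d G  <->  ed_C(G) <= d.
   ed_C(G) = 0 if G in C; for connected G not in C, 1 + min_v ed_C(G - v);
   otherwise the max over connected components (each component is connected,
   so its value is given by one of the first two clauses). *)
Fixpoint ed_le (C : graph_class) (d : nat) (G : sgraph) : Prop :=
  C G \/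
  forall x : vert G,
    C (component x) \/
    match d with
    | 0 => False
    | d'.+1 => exists v : vert (component x), ed_le C d' (delv v)
    end.

From mathcomp Require Import all_boot.
From Stdlib Require Import Classical.
Set Implicit Arguments. Unset Strict Implicit. Unset Printing Implicit Defensive.

(* Let H in C have a minimal blocking set Y0 of size k = beta_C.  Two graph
   operations raise the elimination distance by at most one:
   - the apex over a vertex set N of M (a new vertex adjacent exactly to N);
   - the disjoint double of G.
   With o = OPT(G), a set Y is minimally blocking iff every vertex cover
   containing Y has more than o vertices while each Y - z lies in a cover of
   size o.  Counting covers through this characterisation gives:
   - apex step: the apex over Y turns Y into the minimal blocking set
     {apex} + Y, of size |Y| + 1;
   - doubling step: for y0 in Y, the apex over Y (left copy) + {y0} (right
     copy) of the double of G has the minimal blocking set Y + (Y - y0),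
     of size 2|Y| - 1.
   Iterating the doubling step d times from (H, Y0) gives (k-1) 2^d + 1;
   for k = 1 one apex step followed by d - 1 doublings gives 2^(d-1) + 1.
   The file develops connectivity and isomorphism facts, invariance of the
   elimination distance, the vertex-cover characterisation of minimal
   blocking sets, the two constructions, and finally the theorem. *)

Lemma connect_ind (T : finType) (e : rel T) (x : T) (P : T -> Prop) :
  P x -> (forall a b, connect e x a -> P a -> e a b -> P b) ->
  forall a, connect e x a -> P a.
Proof.
move=> Px step a /connectP [p pth ->].
suff H: forall p z, connect e x z -> P z -> path e z p -> P (last z p).
  by apply: H => //; exact: connect0.
elim=> [//|b q IH] z cz Pz /= /andP[ezb pb].
apply: (IH b) => //; first exact: connect_trans cz (connect1 ezb).
exact: step ezb.
Qed.

Lemma iso_sym (G H : sgraph) : isomorphic G H -> isomorphic H G.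
Proof.
case=> f [[g fK gK] fadj]; exists g; split; first by exists f.
by move=> x y; rewrite -fadj !gK.
Qed.

Lemma induced_iso (G H : sgraph) (S : {set G}) (T : {set H}) (f : G -> H) :
  {in S, forall a, f a \in T} -> {in S &, injective f} ->
  (forall b, b \in T -> exists2 a, a \in S & f a = b) ->
  {in S &, forall a b, adj (f a) (f b) = adj a b} ->
  isomorphic (induced S) (induced T).
Proof.
move=> fST finj fsurj fadj.
pose F (z : induced S) : induced T := exist _ (f (val z)) (fST _ (valP z)).
have [g gK] : exists g : induced T -> induced S, forall t, F (g t) = t.
  apply: (@fin_all_exists _ (fun _ => induced S) (fun t a => F a = t)) => t.
  have [a aS fa] := fsurj _ (valP t).
  by exists (exist (fun x => x \in S) a aS); apply: val_inj.
exists F; split; last by move=> x y; rewrite /= /ind_adj /= fadj //; exact: valP.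
exists g => // z; apply: val_inj; apply: finj; try exact: valP.
by have := congr1 val (gK (F z)).
Qed.

Definition comp_embedding (K M : sgraph) (f : K -> M) (y : K) : Prop :=
  [/\ forall a b, connect (@adj K) y a -> connect (@adj K) y b -> f a = f b -> a = b,
      forall a b, connect (@adj K) y a -> connect (@adj K) y b ->
        adj (f a) (f b) = adj a b &
      forall a b, connect (@adj K) y a -> adj (f a) b -> exists2 a', adj a a' & b = f a'].

Lemma comp_embedding_iso (K M : sgraph) (f : K -> M) (y : K) :
  comp_embedding f y -> isomorphic (component y) (component (f y)).
Proof.
case=> finj fadj flift; apply: induced_iso.
- move=> a; rewrite !inE.
  apply: (@connect_ind _ _ y (fun a => connect (@adj M) (f y) (f a))) => [|c d yc fyc cd].
    exact: connect0.
  apply: connect_trans fyc (connect1 _).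
  by rewrite fadj // (connect_trans yc (connect1 cd)).
- by move=> a b; rewrite !inE; exact: finj.
- move=> b; rewrite inE.
  apply: (@connect_ind _ _ (f y)
    (fun b => exists2 a, a \in [set x | connect (@adj K) y x] & f a = b))
    => [|_ c _ [a ya <-] fac].
    by exists y; rewrite // inE connect0.
  rewrite inE in ya; have [a' aa' ->] := flift _ _ ya fac.
  by exists a'; rewrite // inE (connect_trans ya (connect1 aa')).
- by move=> a b; rewrite !inE; exact: fadj.
Qed.

Lemma bij_comp_embedding (A B : sgraph) (h : A -> B) (y : A) :
  bijective h -> (forall x y, adj (h x) (h y) = adj x y) -> comp_embedding h y.
Proof.
move=> hb hadj; split=> [a b _ _|a b _ _ //|a b _ ab]; first exact: bij_inj.
case: hb => g hK gK; exists (g b); last by rewrite gK.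
by rewrite -hadj gK.
Qed.

Lemma delv_iso (A B : sgraph) (h : A -> B) (u : A) :
  bijective h -> (forall x y, adj (h x) (h y) = adj x y) ->
  isomorphic (delv u) (delv (h u)).
Proof.
move=> hb hadj; apply: (@induced_iso _ _ _ _ h) => //.
- by move=> a; rewrite !in_setC1 (bij_eq hb).
- by move=> a b _ _; apply: bij_inj.
move=> b; rewrite in_setC1 => bu; case: hb => g hK gK.
exists (g b); last by rewrite gK.
by rewrite in_setC1; apply: contra bu => /eqP <-; rewrite gK.
Qed.

(* The condition ed_le imposes on the component of x (the unfolding of one
   level of the definition of ed_le). *)
Definition comp_ed_le (C : graph_class) (d : nat) (G : sgraph) (x : G) : Prop :=
  C (component x) \/
  match d with 0 => False | d'.+1 => exists v : component x, ed_le C d' (delv v) end.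

Lemma ed_leE C d G : ed_le C d G <-> C G \/ forall x : G, comp_ed_le C d x.
Proof. by case: d. Qed.

Lemma ed_le_succ C d G : ed_le C d G -> ed_le C d.+1 G.
Proof.
elim: d G => [|d IH] G [CG|edG]; try by left.
  by right=> x; case: (edG x) => // ?; left.
by right=> x; case: (edG x) => [?|[v ?]]; [left | right; exists v; exact: IH].
Qed.

Lemma comp_ed_le_iso C d (K M : sgraph) (x : K) (x' : M) : iso_closed C ->
  (forall d', d = d'.+1 -> forall A B, isomorphic A B -> ed_le C d' A -> ed_le C d' B) ->
  isomorphic (component x) (component x') -> comp_ed_le C d x -> comp_ed_le C d x'.
Proof.
move=> isoC IH hiso [Cx|]; first by left; exact: isoC Cx.
case: d IH => // d IH [u edu]; right.
case: hiso => h [hb hadj]; exists (h u).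
by apply: (IH d erefl _ _ _ edu); exact: delv_iso.
Qed.

Lemma ed_le_iso C d : iso_closed C ->
  forall A B, isomorphic A B -> ed_le C d A -> ed_le C d B.
Proof.
move=> isoC; elim: d => [|d IH] A B hAB /ed_leE[CA|edA]; apply/ed_leE;
  try by left; exact: isoC hAB CA.
all: right=> x'; have [f [fb fadj]] := hAB; have [g fK gK] := fb.
all: apply: (comp_ed_le_iso isoC _ _ (edA (g x')));
  last by rewrite -{2}(gK x'); apply/comp_embedding_iso/bij_comp_embedding.
- by [].
- by move=> d' [<-].
Qed.

(* If the component of y is isomorphic to a component of M, then it inherits
   the bound ed_C(M) <= d (robustness handles the case M in C). *)
Lemma comp_ed_le_embed C d (K M : sgraph) (f : K -> M) (y : K) :
  iso_closed C -> robust C -> comp_embedding f y -> ed_le C d M -> comp_ed_le C d y.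
Proof.
move=> isoC robC emb /ed_leE edM.
have hiso := iso_sym (comp_embedding_iso emb).
case: edM => [CM|edM]; first by left; apply: isoC hiso _; exact: (proj1 (robC M) CM).
by apply: comp_ed_le_iso hiso (edM (f y)) => // d' _; exact: ed_le_iso.
Qed.

Section VertexCovers.
Variable G : sgraph.
Implicit Types (A B S T Y : {set G}) (o : nat).

Definition opt o : Prop :=
  (exists S, vertex_cover S /\ #|S| = o) /\ forall S, vertex_cover S -> o <= #|S|.

Definition above_opt o A : Prop := forall T, vertex_cover T -> A \subset T -> o < #|T|.

Definition cover_within o A : Prop :=
  exists T, [/\ vertex_cover T, A \subset T & #|T| <= o].

Lemma vertex_coverP S :
  reflect (vertex_cover S) [forall x, forall y, adj x y ==> (x \in S) || (y \in S)].
Proof.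
apply: (iffP forallP) => [vS x y xy | vS x].
  by move/forallP: (vS x) => /(_ y); rewrite xy.
by apply/forallP => y; apply/implyP; exact: vS.
Qed.

Lemma opt_exists : exists o, opt o.
Proof.
pose P n := [exists S : {set G},
  [forall x, forall y, adj x y ==> (x \in S) || (y \in S)] && (#|S| == n)].
have [n Pn] : exists n, P n.
  exists #|[set: G]|; apply/existsP; exists setT; rewrite eqxx andbT.
  by apply/vertex_coverP => x y _; rewrite inE.
case: (ex_minnP (ex_intro P n Pn)) => o /existsP [S /andP[/vertex_coverP vS /eqP cS]] omin.
exists o; split; first by exists S.
move=> S' vS'; apply: omin; apply/existsP; exists S'.
by rewrite eqxx andbT; exact/vertex_coverP.
Qed.

Lemma vertex_cover_sup S S' : vertex_cover S -> S \subset S' -> vertex_cover S'.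
Proof.
move=> vS sub x y xy; case/orP: (vS x y xy) => h; first by rewrite (subsetP sub _ h).
by rewrite (subsetP sub _ h) orbT.
Qed.

Lemma cover_within_sub o A B : cover_within o A -> B \subset A -> cover_within o B.
Proof. by case=> T [vT AT le] BA; exists T; split=> //; exact: subset_trans BA AT. Qed.

Lemma blockingE o Y : opt o -> blocking Y <-> above_opt o Y.
Proof.
move=> [[S0 [vS0 cS0]] omin]; split.
  move=> bl S vS YS; rewrite ltnNge; apply/negP => le; apply: (bl S) => //.
  by split => // S' vS'; exact: leq_trans le (omin _ vS').
by move=> H S [vS minS] YS; have := H S vS YS; rewrite ltnNge -cS0 minS.
Qed.

Lemma minimal_blockingP o Y : opt o ->
  minimal_blocking Y <-> above_opt o Y /\ forall z, z \in Y -> cover_within o (Y :\ z).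
Proof.
move=> op; split=> [[bY mY]|[aY cY]].
  split; first exact/(blockingE _ op).
  move=> z zY; apply: NNPP => nc; apply: (mY _ (properD1 zY)) => S [vS minS] sub.
  by apply: nc; exists S; split => //; case: op => [[S0 [vS0 <-]] _]; exact: minS.
split; first exact/(blockingE _ op).
move=> Z /properP [ZY [z zY zZ]] /(blockingE _ op) aZ.
have [S [vS sub le]] := cY z zY.
suff: o < #|S| by rewrite ltnNge le.
apply: (aZ S vS); apply: subset_trans sub; apply/subsetP => w wZ.
by rewrite !inE (subsetP ZY w wZ) andbT; apply: contraNneq zZ => <-.
Qed.

(* The empty set lies in every minimum cover, so it is never blocking. *)
Lemma minimal_blocking_gt0 Y : minimal_blocking Y -> 0 < #|Y|.
Proof.
case=> bY _; rewrite card_gt0; apply: contraPneq bY => ->.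
have [o [[S [vS cS]] omin]] := opt_exists.
by move/(_ S); apply; [split=> // S' /omin; rewrite cS | exact: sub0set].
Qed.

Lemma minimal_blocking_cover o Y : opt o -> minimal_blocking Y -> cover_within o.+1 Y.
Proof.
move=> op mb; have /card_gt0P [y yY] := minimal_blocking_gt0 mb.
have [_ cY] := proj1 (minimal_blockingP _ op) mb; have [S [vS sub le]] := cY y yY.
exists (y |: S); split.
- exact: vertex_cover_sup vS (subsetUr _ _).
- by rewrite -(setD1K yY) setUS.
- by rewrite cardsU1; case: (y \in S) => //=; exact: leqW.
Qed.

End VertexCovers.

Section Double.
Variable G : sgraph.
Implicit Types (A B Y : {set G}).

Definition double_adj : rel (G + G)%type := fun a b =>
  match a, b with inl x, inl y | inr x, inr y => adj x y | _, _ => false end.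
Lemma double_adj_sym : symmetric double_adj.
Proof. by case=> x [] y //=; rewrite adj_sym. Qed.
Lemma double_adj_irr : irreflexive double_adj.
Proof. by case=> x /=; rewrite adj_irr. Qed.
Definition double : sgraph := SGraph double_adj_sym double_adj_irr.

Definition lproj (S : {set double}) : {set G} := [set x | inl x \in S].
Definition rproj (S : {set double}) : {set G} := [set x | inr x \in S].
Definition dset (A B : {set G}) : {set double} :=
  [set a | match a with inl x => x \in A | inr x => x \in B end].

Lemma card_double (S : {set double}) : #|S| = #|lproj S| + #|rproj S|.
Proof.
by rewrite -!sum1_card (big_sumType _ (fun a : G + G => a \in S)); congr (_ + _);
  apply: eq_bigl => x; rewrite inE.
Qed.

Lemma card_dset A B : #|dset A B| = #|A| + #|B|.
Proof. by rewrite card_double; congr (_ + _); apply: eq_card => x; rewrite !inE. Qed.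

Lemma dsetU A B A' B' : dset A B :|: dset A' B' = dset (A :|: A') (B :|: B').
Proof. by apply/setP => -[x|x]; rewrite !inE. Qed.

Lemma dset_subset A B (S : {set double}) :
  dset A B \subset S -> A \subset lproj S /\ B \subset rproj S.
Proof.
by move=> sub; split; apply/subsetP => x xA; rewrite inE; apply: (subsetP sub); rewrite inE.
Qed.

Lemma vertex_cover_proj (S : {set double}) :
  vertex_cover S -> vertex_cover (lproj S) /\ vertex_cover (rproj S).
Proof.
move=> vS; split=> x y xy; rewrite !inE.
  exact: (vS (inl x) (inl y)).
exact: (vS (inr x) (inr y)).
Qed.

Lemma vertex_cover_dset A B :
  vertex_cover A -> vertex_cover B -> vertex_cover (dset A B).
Proof. by move=> vA vB [x|x] [y|y] //= xy; rewrite !inE; [exact: vA | exact: vB]. Qed.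

Lemma opt_double o : opt G o -> opt double (o + o).
Proof.
move=> [[S0 [vS0 cS0]] omin]; split.
  by exists (dset S0 S0); rewrite card_dset cS0; split=> //; exact: vertex_cover_dset.
move=> S /vertex_cover_proj [vl vr]; rewrite card_double.
by apply: leq_add; apply: omin.
Qed.

Lemma above_opt_double o A B : opt G o -> above_opt o A -> above_opt (o + o) (dset A B).
Proof.
move=> [_ omin] aA S /vertex_cover_proj [vl vr] /dset_subset [AS _].
by rewrite card_double -addSn; apply: leq_add; [exact: aA | exact: omin].
Qed.

Lemma dsetS A B A' B' : A \subset A' -> B \subset B' -> dset A B \subset dset A' B'.
Proof.
by move=> sA sB; apply/subsetP => -[x|x]; rewrite !inE => h;
  [exact: (subsetP sA) | exact: (subsetP sB)].
Qed.

Lemma dsetD1l A B x : dset A B :\ inl x = dset (A :\ x) B.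
Proof. by apply/setP => -[y|y]; rewrite !inE. Qed.

Lemma dsetD1r A B x : dset A B :\ inr x = dset A (B :\ x).
Proof. by apply/setP => -[y|y]; rewrite !inE. Qed.

Lemma cover_within_dset o o' A B :
  cover_within o A -> cover_within o' B -> cover_within (o + o') (dset A B).
Proof.
case=> [S [vS AS leS]] [T [vT BT leT]]; exists (dset S T); split.
- exact: vertex_cover_dset.
- exact: dsetS.
- by rewrite card_dset leq_add.
Qed.

Lemma above_opt_dset o A B :
  above_opt o A -> above_opt o B -> above_opt (o + o).+1 (dset A B).
Proof.
move=> aA aB S /vertex_cover_proj [vl vr] /dset_subset [AS BS].
by rewrite card_double -addSn -addnS; apply: leq_add; [exact: aA | exact: aB].
Qed.

(* The removal covers needed for Y + (Y - y0) in the apex over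
   Y + {y0} of the double. *)
Lemma double_removal_covers o Y y0 : opt G o -> minimal_blocking Y -> y0 \in Y ->
  forall z, z \in dset Y (Y :\ y0) ->
    cover_within (o + o) (dset Y (Y :\ y0) :\ z) \/
    cover_within (o + o).+1 (dset Y [set y0] :|: (dset Y (Y :\ y0) :\ z)).
Proof.
move=> op mb y0Y; have [_ cY] := proj1 (minimal_blockingP _ op) mb.
move=> [y|y]; rewrite inE => yY.
  by left; rewrite dsetD1l; apply: cover_within_dset; [exact: cY | exact: cY].
right; move: yY; rewrite !inE => /andP[yy0 yY].
rewrite dsetD1r dsetU setUid -addSn.
apply: cover_within_sub (cover_within_dset (minimal_blocking_cover op mb) (cY y yY)) _.
apply: dsetS => //; rewrite subUset sub1set !inE eq_sym yy0 y0Y /=.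
by apply/subsetP => w; rewrite !inE => /and3P[-> _ ->].
Qed.

Definition on_left (a : double) : bool := if a is inl _ then true else false.
Definition fold_double (a : double) : G := match a with inl x | inr x => x end.

Lemma on_left_connect (y a : double) : connect (@adj double) y a -> on_left a = on_left y.
Proof.
apply: (@connect_ind _ _ y (fun a => on_left a = on_left y)) => // a0 b _ <-.
by case: a0 => ?; case: b => ?.
Qed.

(* Each component of the double is a component of G: ed_C is unchanged. *)
Lemma ed_le_double C d : iso_closed C -> robust C -> ed_le C d G -> ed_le C d double.
Proof.
move=> isoC robC edG; apply/ed_leE; right => y.
have side a b : connect (@adj double) y a -> connect (@adj double) y b ->
    on_left a = on_left b.
  by move=> /on_left_connect -> /on_left_connect ->.
apply: (comp_ed_le_embed (f := fold_double) isoC robC _ edG); split.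
- move=> a b ya yb; move: (side a b ya yb).
  by case: a {ya} => x; case: b {yb} => z //= _ ->.
- move=> a b ya yb; move: (side a b ya yb).
  by case: a {ya} => x; case: b {yb} => z.
- by move=> [x|x] b _ xb; [exists (inl b) | exists (inr b)].
Qed.

End Double.

Section Apex.
Variables (M : sgraph) (N : {set M}).
Implicit Types (A T Z : {set M}).

Definition apex_adj : rel (option M) := fun a b =>
  match a, b with
  | Some x, Some y => adj x y
  | None, Some y => y \in N
  | Some x, None => x \in N
  | None, None => false end.
Lemma apex_adj_sym : symmetric apex_adj.
Proof. by case=> [x|] [y|] //=; rewrite adj_sym. Qed.
Lemma apex_adj_irr : irreflexive apex_adj.
Proof. by case=> [x|] //=; rewrite adj_irr. Qed.
Definition apex : sgraph := SGraph apex_adj_sym apex_adj_irr.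

Definition oproj (S : {set apex}) : {set M} := [set x | Some x \in S].
Definition lift_set T : {set apex} := [set Some x | x in T].
Definition with_apex T : {set apex} := None |: lift_set T.

Lemma in_lift_set T x : (Some x \in lift_set T) = (x \in T).
Proof. exact/mem_imset/Some_inj. Qed.

Lemma None_lift_set T : (None \in lift_set T) = false.
Proof. by apply/imsetP => -[]. Qed.

Lemma card_apex (S : {set apex}) : #|S| = (None \in S) + #|oproj S|.
Proof.
rewrite (cardsD1 None); congr (_ + _).
rewrite -(card_imset (oproj S) Some_inj); apply: eq_card => -[x|]; rewrite !inE.
  by rewrite (mem_imset _ _ Some_inj) inE.
by apply/esym/imsetP => -[].
Qed.

Lemma card_lift_set T : #|lift_set T| = #|T|.
Proof. exact/card_imset/Some_inj. Qed.

Lemma card_with_apex T : #|with_apex T| = #|T|.+1.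
Proof.
rewrite card_apex setU11 add1n; congr _.+1.
by apply: eq_card => x; rewrite !inE in_lift_set.
Qed.

Lemma lift_setD1 Z z : lift_set Z :\ Some z = lift_set (Z :\ z).
Proof.
by apply/setP => -[x|]; rewrite in_setD1 ?in_lift_set ?None_lift_set ?andbF // in_setD1.
Qed.

Lemma with_apexD1 Z z : with_apex Z :\ Some z = with_apex (Z :\ z).
Proof.
by apply/setP => -[x|]; rewrite /with_apex in_setD1 !in_setU1 ?in_lift_set ?in_setD1.
Qed.

Lemma vertex_cover_oproj (S : {set apex}) :
  vertex_cover S -> vertex_cover (oproj S) /\ (None \in S \/ N \subset oproj S).
Proof.
move=> vS; split; first by move=> x y xy; rewrite !inE; exact: (vS (Some x) (Some y)).
have [nS|nS] := boolP (None \in S); [by left | right].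
apply/subsetP => x xN; rewrite inE.
by have := vS None (Some x); rewrite /= xN (negbTE nS) => /(_ isT).
Qed.

Lemma vertex_cover_with_apex T : vertex_cover T -> vertex_cover (with_apex T).
Proof.
move=> vT [x|] [y|] //= xy; rewrite !inE ?orbT //= !in_lift_set.
by case/orP: (vT x y xy) => ->; rewrite ?orbT.
Qed.

Lemma vertex_cover_lift T : vertex_cover T -> N \subset T -> vertex_cover (lift_set T).
Proof.
move=> vT NT [x|] [y|] //= xy; rewrite ?in_lift_set; first exact: vT.
- by rewrite (subsetP NT _ xy).
- by rewrite (subsetP NT _ xy) orbT.
Qed.

Lemma cover_within_with_apex o A : cover_within o A -> cover_within o.+1 (with_apex A).
Proof.
case=> T [vT AT le]; exists (with_apex T); split.
- exact: vertex_cover_with_apex.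
- exact/setUS/imsetS.
- by rewrite card_with_apex.
Qed.

Lemma cover_within_lift o A : cover_within o (N :|: A) -> cover_within o (lift_set A).
Proof.
case=> T [vT]; rewrite subUset => /andP[NT AT] le; exists (lift_set T); split.
- exact: vertex_cover_lift.
- exact: imsetS.
- by rewrite card_lift_set.
Qed.

Lemma lift_subset_oproj A (S : {set apex}) : lift_set A \subset S -> A \subset oproj S.
Proof.
by move=> sub; apply/subsetP => x xA; rewrite inE (subsetP sub) ?in_lift_set.
Qed.

Lemma above_opt_with_apex o A : above_opt o A -> above_opt o.+1 (with_apex A).
Proof.
move=> aA S vS; rewrite subUset sub1set => /andP[nS /lift_subset_oproj AS].
by rewrite card_apex nS add1n ltnS; apply: aA AS; case: (vertex_cover_oproj vS).
Qed.

Lemma above_opt_lift o A :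
  above_opt o A -> above_opt o.+1 (N :|: A) -> above_opt o.+1 (lift_set A).
Proof.
move=> aA aNA S vS /lift_subset_oproj AS; rewrite card_apex.
case: (vertex_cover_oproj vS) => vT [nS|NS]; first by rewrite nS add1n ltnS; exact: aA.
by apply: leq_trans (leq_addl _ _); apply: aNA vT _; rewrite subUset NS AS.
Qed.

Lemma opt_apex o : opt M o -> above_opt o N -> opt apex o.+1.
Proof.
move=> [[T0 [vT0 cT0]] omin] aN; split.
  exists (with_apex T0).
  by rewrite card_with_apex cT0; split=> //; exact: vertex_cover_with_apex.
move=> S vS; case: (vertex_cover_oproj vS) => vT [nS|NS]; rewrite card_apex.
  by rewrite nS add1n ltnS; exact: omin.
exact: leq_trans (aN _ vT NS) (leq_addl _ _).
Qed.

Lemma minimal_blocking_with_apex o Z : opt M o -> above_opt o N ->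
  minimal_blocking Z -> cover_within o.+1 (N :|: Z) -> minimal_blocking (with_apex Z).
Proof.
move=> op aN /(minimal_blockingP _ op) [aZ cZ] cNZ.
apply/(minimal_blockingP _ (opt_apex op aN)); split; first exact: above_opt_with_apex.
move=> z; rewrite in_setU1 => /orP[/eqP->|/imsetP[z0 z0Z ->]].
  by rewrite setU1K ?None_lift_set //; exact: cover_within_lift.
by rewrite with_apexD1; apply: cover_within_with_apex; exact: cZ.
Qed.

Lemma minimal_blocking_lift o Z : opt M o -> above_opt o N ->
  above_opt o Z -> above_opt o.+1 (N :|: Z) ->
  (forall z, z \in Z -> cover_within o (Z :\ z) \/ cover_within o.+1 (N :|: (Z :\ z))) ->
  minimal_blocking (lift_set Z).
Proof.
move=> op aN aZ aNZ cZ.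
apply/(minimal_blockingP _ (opt_apex op aN)); split; first exact: above_opt_lift.
move=> _ /imsetP[z zZ ->]; rewrite lift_setD1.
case: (cZ z zZ) => [c|]; last exact: cover_within_lift.
case: (cover_within_with_apex c) => T [vT sub le]; exists T; split=> //.
exact: subset_trans (subsetUr _ _) sub.
Qed.

Section ApexDistance.
Variable C : graph_class.
Hypotheses (isoC : iso_closed C) (robC : robust C).

(* Components avoiding the apex vertex are components of M. *)
Lemma comp_ed_le_apex_far d (x : apex) :
  ed_le C d M -> ~~ connect (@adj apex) x None -> comp_ed_le C d x.
Proof.
case: x => [m0|] edM xN; last by rewrite connect0 in xN.
have noApex a : connect (@adj apex) (Some m0) a -> a != None.
  by move=> ca; apply: contraNneq xN => <-.
apply: (comp_ed_le_embed (K := apex) (f := odflt m0) isoC robC _ edM); split.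
- move=> a b ca cb; move: (noApex a ca) (noApex b cb).
  by case: a {ca} => // a; case: b {cb} => // b _ _ /= ->.
- move=> a b ca cb; move: (noApex a ca) (noApex b cb).
  by case: a {ca} => // a; case: b {cb} => // b.
- move=> a b ca ab; exists (Some b) => //; move: (noApex a ca) ab.
  by case: a {ca}.
Qed.

(* Deleting the apex vertex from its component leaves a union of components
   of M. *)
Lemma comp_ed_le_apex_near d (x : apex) :
  ed_le C d M -> connect (@adj apex) x None -> comp_ed_le C d.+1 x.
Proof.
move=> edM xN; right.
have uin : None \in [set y | connect (@adj apex) x y] by rewrite inE.
pose u : component x := exist _ None uin.
exists u; apply/ed_leE; right => y.
have notNone (z : delv u) : val (val z) != None.
  by move: (valP z); rewrite in_setC1; apply: contra => /eqP e; apply/eqP/val_inj.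
case ey: (val (val y)) => [m0|]; last by have := notNone y; rewrite ey.
pose f (z : delv u) : M := odflt m0 (val (val z)).
have fE (z : delv u) : val (val z) = Some (f z).
  by move: (notNone z); rewrite /f; case: (val (val z)).
apply: (comp_ed_le_embed (f := f) isoC robC _ edM); split.
- by move=> a b _ _ fab; apply/val_inj/val_inj; rewrite !fE fab.
- by move=> a b _ _; rewrite /= /ind_adj /= !fE.
move=> a b _ ab.
have cb : Some b \in [set y0 | connect (@adj apex) x y0].
  rewrite inE; apply: (@connect_trans _ _ (val (val a))).
    by have := valP (val a); rewrite inE.
  by apply: connect1; rewrite fE.
pose b1 : component x := exist _ (Some b) cb.
have b1u : b1 \in [set~ u] by rewrite in_setC1; apply/eqP => /(congr1 val).
by exists (exist _ b1 b1u); rewrite // /= /ind_adj /= fE.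
Qed.

Lemma ed_le_apex d : ed_le C d M -> ed_le C d.+1 apex.
Proof.
move=> edM; apply/ed_leE; right => x.
have [xN|xN] := boolP (connect (@adj apex) x None); first exact: comp_ed_le_apex_near.
exact: comp_ed_le_apex_far (ed_le_succ edM) xN.
Qed.

End ApexDistance.
End Apex.

Lemma apex_step C d (G : sgraph) (Y : {set G}) : iso_closed C -> robust C ->
  ed_le C d G -> minimal_blocking Y ->
  exists (G' : sgraph) (Y' : {set G'}),
    [/\ ed_le C d.+1 G', minimal_blocking Y' & #|Y'| = #|Y|.+1].
Proof.
move=> isoC robC edG mb; have [o op] := opt_exists G.
have [aY _] := proj1 (minimal_blockingP _ op) mb.
exists (apex Y), (with_apex Y Y); split.
- exact: (ed_le_apex Y isoC robC edG).
- apply: (minimal_blocking_with_apex op aY mb).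
  by rewrite setUid; exact: minimal_blocking_cover.
- exact: card_with_apex.
Qed.

Lemma doubling_step C d (G : sgraph) (Y : {set G}) m : iso_closed C -> robust C ->
  ed_le C d G -> minimal_blocking Y -> #|Y| = m.+1 ->
  exists (G' : sgraph) (Y' : {set G'}),
    [/\ ed_le C d.+1 G', minimal_blocking Y' & #|Y'| = (m * 2).+1].
Proof.
move=> isoC robC edG mb cY; have [o op] := opt_exists G.
have [y0 y0Y] : {y0 | y0 \in Y} by apply/sigW/card_gt0P; rewrite cY.
have [aY _] := proj1 (minimal_blockingP _ op) mb.
exists (apex (dset Y [set y0])), (lift_set (dset Y [set y0]) (dset Y (Y :\ y0))); split.
- exact: (ed_le_apex _ isoC robC (ed_le_double isoC robC edG)).
- apply: (minimal_blocking_lift (opt_double op)); try exact: above_opt_double.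
    by rewrite dsetU setUid setD1K //; exact: above_opt_dset.
  exact: double_removal_covers.
- rewrite card_lift_set card_dset cY.
  by move: cY; rewrite (cardsD1 y0) y0Y add1n => -[->]; rewrite muln2 -addnn addSn.
Qed.

Lemma doubling_iter C d (G : sgraph) (Y : {set G}) m : iso_closed C -> robust C ->
  ed_le C d G -> minimal_blocking Y -> #|Y| = m.+1 ->
  forall n, exists (G' : sgraph) (Y' : {set G'}),
    [/\ ed_le C (n + d) G', minimal_blocking Y' & #|Y'| = (m * 2 ^ n).+1].
Proof.
move=> isoC robC edG mb cY; elim=> [|n [G' [Y' [ed' mb' c']]]].
  by exists G, Y; rewrite expn0 muln1.
by rewrite addSn expnSr mulnA; exact: doubling_step ed' mb' c'.
Qed.

(* A graph H in C (so ed_C(H) = 0) with a minimal blocking set of size k seeds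
   the iteration; for k = 1 an apex step first raises the size to 2. *)
Theorem mainTheorem5 (C : graph_class) (k : nat) :
  iso_closed C -> robust C -> beta_class_eq C k -> 1 <= k ->
  forall d : nat, 1 <= d ->
  exists G : sgraph, ed_le C d G /\
    exists Y : {set vert G}, minimal_blocking Y /\
      (if k == 1 then 2 ^ d.-1 + 1 else (k - 1) * 2 ^ d + 1) <= #|Y|.
Proof.
move=> isoC robC [_ [H [CH [Y0 [mbY0 cY0]]]]] k_gt0 d d_gt0.
have edH : ed_le C 0 H by left.
case: eqP => [k1|_].
  have [H1 [Y1 [ed1 mb1 cY1]]] := apex_step isoC robC edH mbY0.
  have [G [Y [edG mbY cY]]] := doubling_iter isoC robC ed1 mb1 cY1 d.-1.
  exists G; rewrite addn1 prednK // in edG; split=> //.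
  by exists Y; rewrite cY cY0 k1 mul1n addn1.
have cY0' : #|Y0| = (k - 1).+1 by rewrite cY0 subn1 prednK.
have [G [Y [edG mbY cY]]] := doubling_iter isoC robC edH mbY0 cY0' d.
by exists G; rewrite addn0 in edG; split=> //; exists Y; rewrite cY addn1.
Qed.
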